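(* Let $A,B\in\mathbb D[X]$ both have degree $d$ and valuation $0$, with symmetric subresultants $(S_i)_{-1\le i\le d}$. Fix $\ell\in\{1,\dots,\lfloor d/2\rfloor\}$ and let $(\widehat S_j)_{-1\le j\le 2\ell-1}$ be the symmetric subresultants of $A_{|\ell}$ and $B_{|\ell}$ (polynomials of degree $2\ell-1$, truncated with formal degree $d$). Then for every $1\le j<\ell$, $$S_{j|(\ell-j)}=\widehat S_{j|(\ell-j)},$$ where $S_j$ is truncated as a polynomial of formal degree $d-j$ and $\widehat S_j$ as a polynomial of formal degree $2\ell-1-j$. In particular $S_j(0)=\widehat S_j(0)$ and $\mathrm{co}_{d-j}(S_j)=\mathrm{co}_{2\ell-1-j}(\widehat S_j)$ for $1\le j<\ell$.
   Context: $\mathbb D$ is a subring of $\mathbb C$; $v(P)$ is the largest $v$ with $X^v\mid P$; $\mathrm{co}_k(P)$ is the coefficient of $X^k$. Symmetric subresultants: let $A=\sum_{i=0}^n a_iX^i$, $B=\sum_{i=0}^n b_iX^i$ with $\deg A=n\ge1$ ($B$ of formal degree $n$). Put $a_i=b_i=0$ for $i<0$ or $i>n$. For $1\le j\le n$ and $0\le\ell\le n-j$, let $\mathrm{Sylv}_{j,\ell}$ be the $2j\times 2j$ matrix whose $r$-th row, $1\le r\le j$, is $(a_{1-r},\dots,a_{j-1-r},\ a_{j-r+\ell},\ a_{n+1-r},\dots,a_{n+j-r})$ and whose $(j+r)$-th row is the same with $a$ replaced by $b$. The symmetric subresultants are $S_{-1}=A$, $S_0=B$, $S_j=\sum_{\ell=0}^{n-j}\det(\mathrm{Sylv}_{j,\ell})X^\ell$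 ($1\le j\le n$). Symmetric truncation: for $P=\sum_{i=0}^Dp_iX^i$ regarded as of formal degree $D$ and $m\in\{1,\dots,\lfloor D/2\rfloor\}$, $P_{|m}=p_0+\dots+p_{m-1}X^{m-1}+p_{D-m+1}X^m+\dots+p_DX^{2m-1}$; $P_{|0}=0$; $P_{|m}=P$ for $m>\lfloor D/2\rfloor$. *)

(* C is modelled as complex numbers over Stdlib's reals
   (Rstruct makes Stdlib's R a realType, hence an rcfType, and
   mathcomp-real-closed's complex R is the algebraically closed field R[i]). *)
From Stdlib Require Rdefinitions.
From HB Require Import structures.
From mathcomp Require Import all_boot all_order all_algebra.
From mathcomp Require Import Rstruct.
From mathcomp.real_closed Require Import complex.

Set Implicit Arguments.
Unset Strict Implicit.
Unset Printing Implicit Defensive.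
Import Order.TTheory GRing.Theory Num.Theory.
Local Open Scope ring_scope.

Notation Cc := (complex Rdefinitions.R).

Section Subres.
Variable R : comNzRingType.

Definition fcoef (n : nat) (P : {poly R}) (k : int) : R :=
  match k with
  | Posz m => if (m <= n)%N then P`_m else 0
  | Negz _ => 0
  end.

(* Sylv_{j,l}: the 2j x 2j matrix. 0-based row i: for i < j it is row
   r = i+1 built from A, for i >= j it is row j + r (r = i-j+1) built from B.
   0-based column c: c < j-1 gives a_{c+1-r}; c = j-1 gives a_{j-r+l};
   c >= j gives a_{n+1-r+(c-j)}. *)
Definition sylv (n : nat) (A B : {poly R}) (j l : nat) : 'M[R]_(j + j) :=
  \matrix_(i < j + j, c < j + j)
    let P := if (i < j)%N then A else B in
    let r : int := (if (i < j)%N then i.+1 else (i - j).+1)%N in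
    fcoef n P
      (if (c < j.-1)%N then (c%:Z + 1 - r)%R
       else if c == j.-1 :> nat then (j%:Z - r + l%:Z)%R
       else (n%:Z + 1 - r + (c%:Z - j%:Z))%R).

Definition ssubres (n : nat) (A B : {poly R}) (j : int) : {poly R} :=
  match j with
  | Negz _ => A
  | Posz 0 => B
  | Posz j' => \sum_(l < (n - j').+1) \det (sylv n A B j' l) *: 'X^l
  end.

Definition strunc (D m : nat) (P : {poly R}) : {poly R} :=
  if m == 0%N then 0
  else if (D./2 < m)%N then P
  else \sum_(i < m) P`_i *: 'X^i + \sum_(i < m) P`_(D - m + 1 + i) *: 'X^(m + i).

End Subres.

From HB Require Import structures.
From mathcomp Require Import all_boot all_order all_algebra.
From mathcomp Require Import Rstruct.
From mathcomp.real_closed Require Import complex.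
From mathcomp Require Import zify.
Import Order.TTheory GRing.Theory Num.Theory.
Local Open Scope ring_scope.

(* The only coefficients of A and B entering Sylv_{j,k} are a_i with i < l
   (the first j columns, and the middle column when k < l - j) and a_i with
   i > d - l (the last j columns, and the middle column when k > d - l).
   These are exactly the coefficients kept by the truncation, shifted down by
   d - 2l + 1; so for k < l - j the matrices Sylv_{j,k} and
   Sylv_{j,d-l+1+k} coincide with the truncated ones Sylv_{j,k} and
   Sylv_{j,l+k}, which gives equality of the l - j lowest and highest
   coefficients of S_j and of its truncated counterpart.  The statement is
   purely combinatorial. *)

Section SymmetricTruncation.
Variable R : comNzRingType.

Lemma coef_strunc (D m : nat) (P : {poly R}) i :
  (0 < m)%N -> (m + m <= D)%N ->
  (strunc D m P)`_i = if (i < m)%N then P`_i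
     else if (i < m + m)%N then P`_(D - m + 1 + (i - m)) else 0.
Proof.
move=> m_gt0 mmD; rewrite /strunc eqn0Ngt m_gt0 ltnNge.
have -> /= : (m <= D./2)%N by rewrite -(doubleK m) -addnn half_leq.
have -> : \sum_(i < m) P`_(D - m + 1 + i) *: 'X^(m + i)
    = 'X^m * \poly_(i < m) P`_(D - m + 1 + i).
  by rewrite poly_def mulr_sumr; apply: eq_bigr => k _; rewrite exprD scalerAr.
rewrite -poly_def coefD coef_poly coefXnM coef_poly.
case: ltnP => [_|im]; first by rewrite addr0.
by rewrite add0r ltn_subLR.
Qed.

Lemma strunc_eq (D D' m : nat) (P Q : {poly R}) :
  (0 < m)%N -> (m + m <= D)%N -> (m + m <= D')%N ->
  (forall i, (i < m)%N -> P`_i = Q`_i) ->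
  (forall i, (i < m)%N -> P`_(D - m + 1 + i) = Q`_(D' - m + 1 + i)) ->
  strunc D m P = strunc D' m Q.
Proof.
move=> m_gt0 mmD mmD' low high; apply/polyP => i.
rewrite !coef_strunc //; case: ltnP => [/low//|im].
by case: ltnP => // imm; apply: high; rewrite ltn_subLR.
Qed.

Lemma coef_ssubres n (A B : {poly R}) (j : nat) k : (1 <= j)%N ->
  (ssubres n A B j)`_k = if (k <= n - j)%N then \det (sylv n A B j k) else 0.
Proof.
case: j => // j _ /=.
by rewrite -(@poly_def _ _ (fun l => \det (sylv n A B j.+1 l))) coef_poly ltnS.
Qed.

Variables (d l : nat).
Hypotheses (l_gt0 : (0 < l)%N) (lld : (l + l <= d)%N).

Lemma fcoef_strunc (P : {poly R}) (k k' : int) :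
  (k = k' /\ k' < l%:Z) \/ (k = k' + (d - 2 * l + 1)%N%:Z /\ l%:Z <= k') ->
  fcoef d P k = fcoef (2 * l - 1) (strunc d l P) k'.
Proof.
case: k' => [m|m] [[-> lt_ml]|[-> le_lm]] //=; rewrite coef_strunc //.
- have ml : (m < l)%N by lia.
  have md : (m <= d)%N by lia.
  have m2l : (m <= 2 * l - 1)%N by lia.
  by rewrite ml md m2l.
- have lm : (l <= m)%N by lia.
  rewrite ltnNge lm /=; case: (leqP m (2 * l - 1)) => m2l.
    have mll : (m < l + l)%N by lia.
    have md : (m + (d - 2 * l + 1) <= d)%N by lia.
    by rewrite mll md; congr (P`_ _); lia.
  have md : (m + (d - 2 * l + 1) <= d)%N = false by lia.
  by rewrite md.
Qed.

Lemma sylv_strunc (A B : {poly R}) (j k k' : nat) :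
  (1 <= j)%N -> (j < l)%N ->
  (k = k' /\ (k' < l - j)%N) \/ (k = k' + (d - 2 * l + 1) /\ l <= k')%N ->
  sylv d A B j k = sylv (2 * l - 1) (strunc d l A) (strunc d l B) j k'.
Proof.
move=> j_gt0 jl kk'; apply/matrixP => i c; rewrite !mxE /=.
have ci := ltn_ord c; have ii := ltn_ord i.
case: ifP => ij; apply: fcoef_strunc; case: ifP => ?; [lia| |lia|];
  case: ifP => ?; lia.
Qed.

Lemma coef_ssubres_strunc_low (A B : {poly R}) (j i : nat) :
  (1 <= j)%N -> (i < l - j)%N ->
  (ssubres d A B j)`_i
  = (ssubres (2 * l - 1) (strunc d l A) (strunc d l B) j)`_i.
Proof.
move=> j_gt0 ilj; rewrite !coef_ssubres //.
have idj : (i <= d - j)%N by lia.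
have i2lj : (i <= 2 * l - 1 - j)%N by lia.
have jl : (j < l)%N by lia.
by rewrite idj i2lj (@sylv_strunc _ _ j i i) //; left.
Qed.

Lemma coef_ssubres_strunc_high (A B : {poly R}) (j i : nat) :
  (1 <= j)%N -> (i < l - j)%N ->
  (ssubres d A B j)`_(d - l + 1 + i)
  = (ssubres (2 * l - 1) (strunc d l A) (strunc d l B) j)`_(l + i).
Proof.
move=> j_gt0 ilj; rewrite !coef_ssubres //.
have idj : (d - l + 1 + i <= d - j)%N by lia.
have i2lj : (l + i <= 2 * l - 1 - j)%N by lia.
have jl : (j < l)%N by lia.
rewrite idj i2lj (@sylv_strunc _ _ j _ (l + i)) //.
by right; split; lia.
Qed.

End SymmetricTruncation.
Theorem lemma8 (D : {pred Cc}) (HD : subring_closed D)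
  (d : nat) (A B : {poly Cc})
  (HAD : A \is a polyOver D) (HBD : B \is a polyOver D)
  (HdegA : size A = d.+1) (HdegB : size B = d.+1)
  (HvA : ~~ ('X %| A)) (HvB : ~~ ('X %| B))
  (l : nat) (Hl1 : (1 <= l)%N) (Hl2 : (l <= d./2)%N) :
  let S := ssubres d A B in
  let Shat := ssubres (2 * l - 1) (strunc d l A) (strunc d l B) in
  forall j : nat, (1 <= j)%N -> (j < l)%N ->
    [/\ strunc (d - j) (l - j) (S j) = strunc (2 * l - 1 - j) (l - j) (Shat j),
        (S j)`_0 = (Shat j)`_0
      & (S j)`_(d - j) = (Shat j)`_(2 * l - 1 - j)].
Proof.
move=> S Shat j j_gt0 jl.
have lld : (l + l <= d)%N by rewrite addnn -geq_half_double.
have low i : (i < l - j)%N -> (S j)`_i = (Shat j)`_i.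
  exact: coef_ssubres_strunc_low.
have high i : (i < l - j)%N -> (S j)`_(d - l + 1 + i) = (Shat j)`_(l + i).
  exact: coef_ssubres_strunc_high.
split.
- apply: strunc_eq => //; try lia.
  move=> i /high; rewrite (_ : d - j - (l - j) = d - l)%N; last by lia.
  by rewrite (_ : 2 * l - 1 - j - (l - j) + 1 = l)%N //; lia.
- by apply: low; lia.
- have := high (l - j - 1)%N ltac:(lia).
  rewrite (_ : d - l + 1 + _ = d - j)%N; last by lia.
  by rewrite (_ : l + _ = 2 * l - 1 - j)%N //; lia.
Qed.
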